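(* Consider binary-payoff, perfect-news collective choice problems (as in the context) with a fixed number $n$ of voters, each described by $(P_W,v)$ with $v=(v_w,v_\ell)$. (a) If two such problems have the same $P_W$ and payoffs $v,v'$ with $v_\ell/v_w\ge v'_\ell/v'_w$, then $(P_W,v)\succeq_{AC}(P_W,v')$. (b) If two such problems have the same payoffs $v$ and winner distributions $P_W,P'_W$ with $P_W\succeq_{LR}P'_W$, then $(P'_W,v)\succeq_{AC}(P_W,v)$.
   Context: Setting: $n\ge3$ odd, $\tau=(n-1)/2$, voters $1,\dots,n$ vote for $p^*$ or $p_*$, a policy wins iff it gets more than $\tau$ votes. A state $\omega$ specifies each voter's payoff difference $V_i^d$ between $p^*$ and $p_*$ and a signal $s_i\in\mathcal S=\{s^0,\dots,s^K\}$ privately observed by $i$ ($\mathcal M=\{s^1,\dots,s^K\}$ informative); $P$ is the probability on states. Standing assumptions: $P$ invariant under permutations of voters; if $s_i=s^0$ then $s_i$ is independent of $(V,S_{-i})$; for $s_i\ne s^0$, $E[V_i^d\mid S=s]>0$ iff $E[V_i^d\mid S_i=s_i]>0$; conditional expectations of $V_i^d$ given non-null events are nonzero; $P(B\ge1)>0$ and $P(G\ge\tau)>0$, where $G$ ($B$) counts voters whose signal $s^k$ is good news, $E[V_i^d\mid S_i=s^k]>0$ (bad news, $<0$). Binary payoffs: $V_i^d\in\{v_w,-v_\ell\}$ with $v_w,v_\ell>0$; $W_i=\{V_i^d>0\}$ (voter $i$ is a winner), $W$ = number of winners, $P_W$ the distribution of $W$ on $\{0,\dots,n\}$; $p^*$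 is ex ante optimal: $P(W_i)v_w-(1-P(W_i))v_\ell>0$. Perfect news: $P(W_i\mid S_i=s^k)\in\{0,1\}$ for every informative $s^k$. Then the problem is represented by $(P_W,v)$, and $V^G(\kappa\mid P_W,v)=E[V_i^d\mid G=\kappa,B=0,S_i=s^0]$ depends only on $(P_W,v)$. The polarization ratio is $v_\ell/v_w$. $(P_W,v)\succeq_{AC}(P'_W,v')$ (''more adversely correlated'') means: for every $\kappa\in\{1,\dots,\tau\}$, $V^G(\kappa\mid P'_W,v')<0$ implies $V^G(\kappa\mid P_W,v)<0$. $P'_W\succeq_{LR}P_W$ (likelihood-ratio dominance) means $P'_W(w')P_W(w)\ge P'_W(w)P_W(w')$ whenever $w'>w$. *)

From mathcomp Require Import all_boot all_order all_algebra.
Set Implicit Arguments. Unset Strict Implicit. Unset Printing Implicit Defensive.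
Import Order.TTheory GRing.Theory Num.Theory.
Local Open Scope ring_scope.

(* Binary-payoff, perfect-news collective choice problem with n voters,
   represented by (P_W, v) where P_W : nat -> R is the distribution of the
   number of winners W on {0,...,n}, v = (vw, vl). *)

Definition tau (n : nat) : nat := (n.-1)./2.

(* Probability that a given voter is a winner: P(W_i) = E[W]/n (exchangeability). *)
Definition prob_winner {R : realFieldType} (n : nat) (PW : nat -> R) : R :=
  (\sum_(0 <= w < n.+1) PW w * w%:R) / n%:R.

(* The standing assumptions, as far as they constrain (P_W, v):
   P_W is a probability distribution on {0..n}; vw, vl > 0;
   p* ex ante optimal; P(G >= tau) > 0 forces mass on {W >= tau};
   P(B >= 1) > 0 forces mass on {W < n}. *)
Definition binary_problem {R : realFieldType} (n : nat) (PW : nat -> R)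
    (vw vl : R) : Prop :=
  (forall w, 0 <= PW w) /\
  (forall w, (n < w)%N -> PW w = 0) /\
  \sum_(0 <= w < n.+1) PW w = 1 /\
  0 < vw /\ 0 < vl /\
  0 < prob_winner n PW * vw - (1 - prob_winner n PW) * vl /\
  (exists w, [/\ (tau n <= w)%N, (w <= n)%N & 0 < PW w]) /\
  (exists w, (w < n)%N /\ 0 < PW w).

(* V^G(k | P_W, v) = E[V_i^d | G = k, B = 0, S_i = s^0].
   Given W = w, the winner set is uniform (exchangeability); conditioning on
   k given voters being (revealed) winners, none revealed a loser, and i
   uninformed (null signals independent of everything) yields posterior
   weights proportional to P_W(w) * C(w,k), and P(i wins | w, k) = (w-k)/(n-k). *)
Definition VG {R : realFieldType} (n : nat) (PW : nat -> R) (vw vl : R)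
    (k : nat) : R :=
  (\sum_(0 <= w < n.+1)
      PW w * 'C(w, k)%:R * ((w - k)%:R * vw - (n - w)%:R * vl))
  / ((n - k)%:R * \sum_(0 <= w < n.+1) PW w * 'C(w, k)%:R).

Definition more_adverse {R : realFieldType} (n : nat)
    (PW : nat -> R) (vw vl : R) (PW' : nat -> R) (vw' vl' : R) : Prop :=
  forall k : nat, (1 <= k)%N -> (k <= tau n)%N ->
    VG n PW' vw' vl' k < 0 -> VG n PW vw vl k < 0.

Definition lr_dom {R : realFieldType} (n : nat) (P' P : nat -> R) : Prop :=
  forall w w' : nat, (w < w')%N -> (w' <= n)%N ->
    P' w * P w' <= P' w' * P w.

(* V^G(k) has the sign of A = \sum_w P_W(w) C(w,k) g(w), where
   g(w) = (w - k) v_w - (n - w) v_l.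
   (a) A / v_w = \sum_w P_W(w) C(w,k) (w - k) - (v_l / v_w) \sum_w P_W(w) C(w,k) (n - w)
   decreases in the polarization ratio v_l / v_w.
   (b) g is nondecreasing in w, and likelihood-ratio dominance of P_W over P'_W
   transfers to the weights P_W(w) C(w,k); a likelihood-ratio dominant
   distribution gives a nondecreasing function a larger mean, so A < 0 under
   P_W forces A < 0 under P'_W. *)
From mathcomp Require Import all_boot all_order all_algebra.
From mathcomp Require Import ring lra.
Set Implicit Arguments. Unset Strict Implicit.
Import Order.TTheory GRing.Theory Num.Theory.
Local Open Scope ring_scope.

Section AdverseCorrelation.

Variable R : realFieldType.

Lemma divr_pmul_lt0 (A c Q : R) :
  0 < c -> 0 <= Q -> (A / (c * Q) < 0) = (A < 0) && (0 < Q).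
Proof.
move=> c_gt0 Q_ge0; have [->|Q_neq0] := eqVneq Q 0.
  by rewrite mulr0 invr0 mulr0 ltxx andbF.
have Q_gt0 : 0 < Q by rewrite lt_def Q_neq0.
by rewrite pmulr_llt0 ?invr_gt0 ?mulr_gt0 // Q_gt0 andbT.
Qed.

Lemma lr_dom_scale N (P' P c : nat -> R) :
  (forall w, 0 <= c w) -> lr_dom N P' P ->
  lr_dom N (fun w => P' w * c w) (fun w => P w * c w).
Proof.
move=> c_ge0 P'P w w' ww' w'N /=.
rewrite mulrACA [P' w' * _ * _]mulrACA [c w' * _]mulrC.
by apply: ler_wpM2r; [exact: mulr_ge0 | exact: P'P].
Qed.

(* Symmetrize the double sum of q' w q w' (h w - h w'): every pair (w, w')
   contributes a product of two factors of opposite signs. *)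
Lemma lr_dom_mean_le N (q q' h : nat -> R) :
  lr_dom N q q' -> {homo h : w w' / (w <= w')%N >-> w <= w'} ->
  (\sum_(0 <= w < N.+1) q' w * h w) * (\sum_(0 <= w < N.+1) q w)
  <= (\sum_(0 <= w < N.+1) q w * h w) * (\sum_(0 <= w < N.+1) q' w).
Proof.
move=> qq' h_homo.
pose E w w' := q' w * q w' * (h w - h w').
have sum_E : \sum_(0 <= w < N.+1) \sum_(0 <= w' < N.+1) E w w'
    = (\sum_(0 <= w < N.+1) q' w * h w) * (\sum_(0 <= w < N.+1) q w)
      - (\sum_(0 <= w < N.+1) q w * h w) * (\sum_(0 <= w < N.+1) q' w).
  rewrite mulr_suml [X in _ - X]mulrC mulr_suml -sumrB; apply: eq_bigr => w _.
  by rewrite !mulr_sumr -sumrB; apply: eq_bigr => w' _; rewrite /E; ring.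
have E_sym_le0 w w' : (w <= N)%N -> (w' <= N)%N -> E w w' + E w' w <= 0.
  have -> : E w w' + E w' w = (q' w * q w' - q' w' * q w) * (h w - h w').
    by rewrite /E; ring.
  move=> wN w'N.
  case: (ltngtP w w') => [ww'|w'w|->]; last by rewrite !subrr mul0r.
  - have := qq' w w' ww' w'N; have := h_homo w w' (ltnW ww').
    by move=> hww' qww'; apply: mulr_ge0_le0; lra.
  - have := qq' w' w w'w wN; have := h_homo w' w (ltnW w'w).
    by move=> hw'w qw'w; apply: mulr_le0_ge0; lra.
have : \sum_(0 <= w < N.+1) \sum_(0 <= w' < N.+1) (E w w' + E w' w) <= 0.
  rewrite big_nat_cond; apply: sumr_le0 => w /andP[/andP[_ wN] _].
  rewrite big_nat_cond; apply: sumr_le0 => w' /andP[/andP[_ w'N] _].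
  exact: E_sym_le0.
under eq_bigr do rewrite big_split /=.
rewrite big_split /= [X in _ + X]exchange_big /= sum_E; lra.
Qed.

(* (n - k) times the expected payoff of an uninformed voter, given W = w
   and k revealed winners. *)
Definition gain (n : nat) (vw vl : R) (k w : nat) : R := (w - k)%:R * vw - (n - w)%:R * vl.

Definition VG_num (n : nat) (PW : nat -> R) (vw vl : R) (k : nat) : R :=
  \sum_(0 <= w < n.+1) PW w * 'C(w, k)%:R * gain n vw vl k w.

Definition VG_mass (n : nat) (PW : nat -> R) (k : nat) : R :=
  \sum_(0 <= w < n.+1) PW w * 'C(w, k)%:R.

Lemma VG_lt0 n (PW : nat -> R) vw vl k : (forall w, 0 <= PW w) ->
  VG n PW vw vl k < 0 <->
  [/\ (k < n)%N, VG_num n PW vw vl k < 0 & 0 < VG_mass n PW k].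
Proof.
move=> PW_ge0; have mass_ge0 : 0 <= VG_mass n PW k.
  by apply: sumr_ge0 => w _; rewrite mulr_ge0.
rewrite /VG -/(VG_num n PW vw vl k) -/(VG_mass n PW k).
have [kn|nk] := ltnP k n.
  by rewrite divr_pmul_lt0 ?ltr0n ?subn_gt0 //; split=> [/andP[]|[_ -> ->]].
move: (nk); rewrite -subn_eq0 => /eqP ->; rewrite mul0r invr0 mulr0 ltxx.
by split=> // -[kn]; move: nk; rewrite leqNgt kn.
Qed.

Lemma VG_mass_gt0 n (PW : nat -> R) k w : (forall w, 0 <= PW w) ->
  (k <= w <= n)%N -> 0 < PW w -> 0 < VG_mass n PW k.
Proof.
move=> PW_ge0 /andP[kw wn] PWw_gt0.
have terms_ge0 i : 0 <= PW i * 'C(i, k)%:R by rewrite mulr_ge0.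
rewrite lt_def psumr_neq0 ?sumr_ge0 // andbT; apply/hasP; exists w.
  by rewrite mem_index_iota ltnS wn.
by rewrite mulr_gt0 // ltr0n bin_gt0.
Qed.

Lemma gain_homo n (vw vl : R) k : 0 <= vw -> 0 <= vl ->
  {homo gain n vw vl k : w w' / (w <= w')%N >-> w <= w'}.
Proof.
move=> vw_ge0 vl_ge0 w w' ww'; apply: lerB.
  by apply: ler_wpM2r; rewrite // ler_nat leq_sub2r.
by apply: ler_wpM2r; rewrite // ler_nat leq_sub2l.
Qed.

Lemma VG_numE n (PW : nat -> R) vw vl k :
  VG_num n PW vw vl k
  = (\sum_(0 <= w < n.+1) PW w * 'C(w, k)%:R * (w - k)%:R) * vw
    - (\sum_(0 <= w < n.+1) PW w * 'C(w, k)%:R * (n - w)%:R) * vl.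
Proof. by rewrite !mulr_suml -sumrB; apply: eq_bigr => w _; rewrite /gain; ring. Qed.

Lemma VG_lt0_ratio n (PW : nat -> R) (vw vl vw' vl' : R) k :
  (forall w, 0 <= PW w) -> 0 < vw -> 0 < vw' -> vl' / vw' <= vl / vw ->
  VG n PW vw' vl' k < 0 -> VG n PW vw vl k < 0.
Proof.
move=> PW_ge0 vw_gt0 vw'_gt0 ratio.
move=> /(VG_lt0 n vw' vl' k PW_ge0)[kn num'_lt0 mass_gt0].
apply/(VG_lt0 n vw vl k PW_ge0); split=> //; move: num'_lt0; rewrite !VG_numE.
set X := \sum_(_ <= _ < _) _; set Y := \sum_(_ <= _ < _) _ => num'_lt0.
have Y_ge0 : 0 <= Y by apply: sumr_ge0 => w _; rewrite !mulr_ge0.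
have X_lt : X < Y * (vl' / vw') by rewrite mulrA ltr_pdivlMr //; lra.
have : X < Y * (vl / vw) by apply: lt_le_trans X_lt (ler_wpM2l Y_ge0 ratio).
by rewrite mulrA ltr_pdivlMr //; lra.
Qed.

Lemma VG_lt0_lr_dom n (PW PW' : nat -> R) (vw vl : R) k :
  (forall w, 0 <= PW w) -> (forall w, 0 <= PW' w) -> 0 <= vw -> 0 <= vl ->
  lr_dom n PW PW' -> 0 < VG_mass n PW' k ->
  VG n PW vw vl k < 0 -> VG n PW' vw vl k < 0.
Proof.
move=> PW_ge0 PW'_ge0 vw_ge0 vl_ge0 PW_PW' mass'_gt0.
move=> /(VG_lt0 n vw vl k PW_ge0)[kn num_lt0 mass_gt0].
apply/(VG_lt0 n vw vl k PW'_ge0); split=> //.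
have mean_le : VG_num n PW' vw vl k * VG_mass n PW k
               <= VG_num n PW vw vl k * VG_mass n PW' k.
  apply: (lr_dom_mean_le (lr_dom_scale _ PW_PW') (gain_homo n k vw_ge0 vl_ge0)).
  by move=> w; rewrite ler0n.
have : VG_num n PW vw vl k * VG_mass n PW' k < 0 by rewrite pmulr_llt0.
by move/(le_lt_trans mean_le); rewrite pmulr_llt0.
Qed.

End AdverseCorrelation.

Theorem proposition3 (R : realFieldType) (n : nat) :
  odd n -> (3 <= n)%N ->
  (forall (PW : nat -> R) (vw vl vw' vl' : R),
      binary_problem n PW vw vl -> binary_problem n PW vw' vl' ->
      vl' / vw' <= vl / vw ->
      more_adverse n PW vw vl PW vw' vl')
  /\
  (forall (PW PW' : nat -> R) (vw vl : R),
      binary_problem n PW vw vl -> binary_problem n PW' vw vl ->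
      lr_dom n PW PW' ->
      more_adverse n PW' vw vl PW vw vl).
Proof.
move=> _ _; split.
- move=> PW vw vl vw' vl' [PW_ge0 [_ [_ [vw_gt0 _]]]] [_ [_ [_ [vw'_gt0 _]]]].
  by move=> ratio k _ _; apply: VG_lt0_ratio.
- move=> PW PW' vw vl [PW_ge0 [_ [_ [vw_gt0 [vl_gt0 _]]]]].
  move=> [PW'_ge0 [_ [_ [_ [_ [_ [[w [tau_w w_n PW'w_gt0]] _]]]]]]] PW_PW' k _ k_tau.
  apply: VG_lt0_lr_dom => //; rewrite ?ltW //.
  by apply: (VG_mass_gt0 (w := w)); rewrite ?(leq_trans k_tau tau_w).
Qed.
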